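(* Let $j\ge3$ and $n\ge j-2$ be integers. (i) If $n\ge 2j-2$, then there exists $\tilde\lambda\in(1/n,n)$ with the following properties: - $\lambda_{n,j}(\lambda)>1/n$ for all $\lambda\in(1/n,\tilde\lambda)$; - $\lambda_{n,j}(\lambda)=1/n$ for $\lambda\in\{1/n,\tilde\lambda\}$; - $\lambda_{n,j}(\lambda)<1/n$ for all $\lambda\in(\tilde\lambda,\infty]$. (ii) If $n\le 2j-3$, then $\lambda_{n,j}(\lambda)<1/n$ for all $\lambda\in(1/n,\infty]$.
   Context: For an integer $n\ge1$ let $f_n(x)=(1+x)^{n+1}/x$ for $x>0$. The function $f_n$ is strictly decreasing on $(0,1/n]$ and strictly increasing on $[1/n,\infty)$. Regular graph exponents (Schmidt–Summerer), defined algebraically. For $\lambda\in[1/n,\infty)$ let $\mu\in(0,1/n]$ be the unique solution of $f_n(\mu)=f_n(\lambda)$, and set $$\lambda_{n,j}(\lambda)=\lambda^{1-\frac{j-1}{n+1}}\mu^{\frac{j-1}{n+1}},\qquad 1\le j\le n+2 .$$ All ratios $\lambda_{n,j}/\lambda_{n,j+1}$ are equal. For $\lambda=\infty$ put $\lambda_{n,1}=\infty$, $\lambda_{n,2}=1$ and $\lambda_{n,j}=0$ for $3\le j\le n+2$. These are the exponents $\lambda_{n,j}$ of the regular graph in dimension $n$ with parameter $\lambda_n=\lambda$. They depend continuously on $\lambda$. *)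

From Stdlib Require Import Reals ClassicalEpsilon.
Open Scope R_scope.

Definition f (n : nat) (x : R) : R := (1 + x) ^ (n + 1) / x.

(* mu(lambda): the (unique) solution mu in (0,1/n] of f_n(mu) = f_n(lambda).
   Chosen by Hilbert's epsilon; existence and uniqueness are facts about f_n. *)
Definition mu_of (n : nat) (lam : R) : R :=
  epsilon (inhabits 0) (fun m => 0 < m <= / INR n /\ f n m = f n lam).

Inductive Rbar : Type := Fin (x : R) | PInf.

Definition Rbar_lt (a b : Rbar) : Prop :=
  match a, b with
  | Fin x, Fin y => x < y
  | Fin _, PInf => True
  | PInf, _ => False
  end.

Definition lambda_nj (n j : nat) (x : Rbar) : Rbar :=
  match x with
  | Fin lam =>
      let e := (INR j - 1) / (INR n + 1) in
      Fin (Rpower lam (1 - e) * Rpower (mu_of n lam) e)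
  | PInf =>
      if Nat.eqb j 1 then PInf else if Nat.eqb j 2 then Fin 1 else Fin 0
  end.

From Pilot Require Import Defs.
From Stdlib Require Import Reals Ranalysis5 Lra Lia Psatz ClassicalEpsilon.
Open Scope R_scope.

(* Put [s = (1 + mu) / (1 + lambda)] and [G_n(s) = 1 + s + ... + s^(n-1)].  Then
   [f_n(mu) = f_n(lambda)] amounts to [mu = s^(n+1) lambda] and [lambda s G_n(s) = 1], so that
   [s] runs decreasingly through [(0, 1)] as [lambda] runs through [(1/n, oo)], and
   [lambda_{n,k+2} = s^k / G_n(s)].  Thus [lambda_{n,k+2} < 1/n] iff [L(s) > 0], where
   [L(s) = (G_n(s) - n s^k) / (s^k (1 - s)) = sum_(i<n) (s^i - s^k) / (s^k (1 - s))].
   Each summand is a Laurent polynomial in [s], nonincreasing on [(0, oo)] and strictly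
   decreasing for [i = 0]; hence [L] is strictly decreasing, with [L(1) = n (2k + 1 - n) / 2].
   If [n <= 2k+1], [L > L(1) >= 0] on [(0, 1)].  If [n >= 2k+2], [L(1) < 0 < L(1/n)], so [L]
   has exactly one zero [z], and [tilde lambda] is the [lambda] belonging to [s = z]. *)

Fixpoint geom (n : nat) (s : R) : R :=
  match n with O => 0 | S m => geom m s + s ^ m end.

Lemma geom_closed n s : (1 - s) * geom n s = 1 - s ^ n.
Proof. induction n as [|n IH]; simpl; [ring|]. rewrite Rmult_plus_distr_l, IH; ring. Qed.

Lemma geom_one n : geom n 1 = INR n.
Proof. induction n as [|n IH]; [reflexivity|]. simpl geom. rewrite IH, pow1, S_INR; reflexivity. Qed.

Lemma geom_ge0 n s : 0 <= s -> 0 <= geom n s.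
Proof. intros Hs. induction n as [|n IH]; simpl; [lra|]. pose proof (pow_le s n Hs). lra. Qed.

Lemma geom_ge1 n s : (1 <= n)%nat -> 0 <= s -> 1 <= geom n s.
Proof.
  intros Hn Hs. induction n as [|[|n] IH]; [lia|simpl; lra|].
  change (geom (S (S n)) s) with (geom (S n) s + s ^ S n).
  pose proof (pow_le s (S n) Hs). specialize (IH ltac:(lia)). lra.
Qed.

Lemma geom_ge_1_plus n s : (2 <= n)%nat -> 0 <= s -> 1 + s <= geom n s.
Proof.
  intros Hn Hs. induction n as [|[|[|n]] IH]; try lia; [simpl; lra|].
  change (geom (S (S (S n))) s) with (geom (S (S n)) s + s ^ S (S n)).
  pose proof (pow_le s (S (S n)) Hs). specialize (IH ltac:(lia)). lra.
Qed.

Lemma geom_le_compat n a b : 0 <= a <= b -> geom n a <= geom n b.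
Proof. intros Hab. induction n as [|n IH]; simpl; [lra|]. pose proof (pow_incr a b n Hab). lra. Qed.

Lemma pow_mul_le_geom n s : 0 <= s <= 1 -> INR n * s ^ n <= geom n s.
Proof.
  intros Hs. induction n as [|n IH]; [simpl; lra|].
  rewrite S_INR. simpl geom. simpl pow.
  assert (s * s ^ n <= s ^ n) by (pose proof (pow_le s n ltac:(lra)); nra).
  pose proof (pos_INR n). nra.
Qed.

Lemma pow_le_base a k : 0 <= a <= 1 -> (1 <= k)%nat -> a ^ k <= a.
Proof.
  intros Ha Hk. replace k with (S (k - 1)) by lia. simpl.
  pose proof (pow_incr a 1 (k - 1) ltac:(lra)). rewrite pow1 in H. nra.
Qed.

Lemma geom_continuous n : continuity (geom n).
Proof.
  apply derivable_continuous. induction n as [|n IH]; simpl.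
  - apply derivable_const.
  - change (derivable (geom n + (fun s => s ^ n))%F).
    apply derivable_plus; [exact IH | apply derivable_pow].
Qed.

Lemma mul_geom_lt n a b : (1 <= n)%nat -> 0 <= a < b -> a * geom n a < b * geom n b.
Proof.
  intros Hn Hab. pose proof (geom_le_compat n a b ltac:(lra)). pose proof (geom_ge1 n a Hn ltac:(lra)).
  nra.
Qed.

Lemma mul_geom_lt_INR n s : (1 <= n)%nat -> 0 <= s < 1 -> s * geom n s < INR n.
Proof. intros Hn Hs. rewrite <- geom_one, <- (Rmult_1_l (geom n 1)). now apply mul_geom_lt. Qed.

(* [slope i k s = (s^i - s^k) / (s^k (1 - s))], written as a Laurent polynomial in [s]
   (one of the two truncated subtractions is always [0]); it stays meaningful at [s = 1]. *)
Definition slope (i k : nat) (s : R) : R := / s * geom (k - i) (/ s) - geom (i - k) s.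

Fixpoint slope_sum (n k : nat) (s : R) : R :=
  match n with O => 0 | S m => slope_sum m k s + slope m k s end.

Lemma slope_spec i k s : 0 < s -> s ^ k * (1 - s) * slope i k s = s ^ i - s ^ k.
Proof.
  intros Hs. unfold slope. destruct (Nat.le_gt_cases k i) as [Hki|Hik].
  - replace (k - i)%nat with 0%nat by lia. replace i with (k + (i - k))%nat at 2 by lia.
    pose proof (geom_closed (i - k) s). rewrite pow_add. simpl geom. nra.
  - replace (i - k)%nat with 0%nat by lia. replace k with (i + (k - i))%nat at 1 3 by lia.
    pose proof (geom_closed (k - i) (/ s)) as Hg. rewrite pow_add, pow_inv in *. simpl geom.
    pose proof (pow_lt s (k - i) Hs).
    replace (s ^ i * s ^ (k - i) * (1 - s) * (/ s * geom (k - i) (/ s) - 0))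
      with (- (s ^ i * s ^ (k - i)) * ((1 - / s) * geom (k - i) (/ s))) by (field; lra).
    rewrite Hg. field. lra.
Qed.

Lemma slope_sum_spec n k s :
  0 < s -> s ^ k * (1 - s) * slope_sum n k s = geom n s - INR n * s ^ k.
Proof.
  intros Hs. induction n as [|n IH]; [simpl; ring|].
  simpl slope_sum. simpl geom. rewrite S_INR, Rmult_plus_distr_l, IH, slope_spec by exact Hs. ring.
Qed.

Lemma slope_sum_one n k : slope_sum n k 1 = INR n * INR k - INR n * (INR n - 1) / 2.
Proof.
  induction n as [|n IH]; [simpl; field|].
  simpl slope_sum. rewrite IH, S_INR. unfold slope. rewrite Rinv_1, !geom_one.
  destruct (Nat.le_gt_cases k n).
  - replace (k - n)%nat with 0%nat by lia. rewrite minus_INR by lia. simpl. field.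
  - replace (n - k)%nat with 0%nat by lia. rewrite minus_INR by lia. simpl. field.
Qed.

Lemma slope_antitone i k a b : 0 < a <= b -> slope i k b <= slope i k a.
Proof.
  intros Hab. unfold slope.
  assert (Hinv : 0 < / b <= / a) by (split; [apply Rinv_0_lt_compat | apply Rinv_le_contravar]; lra).
  pose proof (geom_le_compat (k - i) (/ b) (/ a) ltac:(lra)).
  pose proof (geom_ge0 (k - i) (/ b) ltac:(lra)).
  pose proof (geom_le_compat (i - k) a b ltac:(lra)). nra.
Qed.

Lemma slope0_decreasing k a b : (1 <= k)%nat -> 0 < a < b -> slope 0 k b < slope 0 k a.
Proof.
  intros Hk Hab. unfold slope. rewrite Nat.sub_0_r, Nat.sub_0_l. simpl geom.
  assert (/ b < / a) by (apply Rinv_lt_contravar; nra).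
  pose proof (mul_geom_lt k (/ b) (/ a) Hk ltac:(split; [left; apply Rinv_0_lt_compat|]; lra)). lra.
Qed.

Lemma slope_sum_decreasing n k a b :
  (1 <= n)%nat -> (1 <= k)%nat -> 0 < a < b -> slope_sum n k b < slope_sum n k a.
Proof.
  intros Hn Hk Hab. induction n as [|[|n] IH]; [lia| |].
  - simpl. pose proof (slope0_decreasing k a b Hk Hab). lra.
  - pose proof (slope_antitone (S n) k a b ltac:(lra)). specialize (IH ltac:(lia)).
    simpl in *. lra.
Qed.

Lemma slope_sum_continuous n k s : 0 < s -> continuity_pt (slope_sum n k) s.
Proof.
  intros Hs. induction n as [|n IH]; simpl.
  - apply continuity_pt_const. intros x y; reflexivity.
  - change (continuity_pt (slope_sum n k + slope n k)%F s).
    apply continuity_pt_plus; [exact IH|]. unfold slope.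
    assert (Hinv : continuity_pt Rinv s).
    { apply (continuity_pt_inv id); [apply derivable_continuous_pt, derivable_pt_id | unfold id; lra]. }
    change (continuity_pt (Rinv * comp (geom (k - n)) Rinv - geom (n - k))%F s).
    apply continuity_pt_minus; [apply continuity_pt_mult; [exact Hinv|]|apply geom_continuous].
    apply continuity_pt_comp; [exact Hinv | apply geom_continuous].
Qed.

Lemma param_pos n lam s : (1 <= n)%nat -> 0 < s -> lam * (s * geom n s) = 1 -> 0 < lam.
Proof.
  intros Hn Hs Hparam. pose proof (geom_ge1 n s Hn ltac:(lra)).
  assert (0 < s * geom n s) by nra. destruct (Rlt_or_le 0 lam); [assumption | nra].
Qed.

(* With [mu = s^(n+1) lambda], the right-hand side is [1 + mu = s (1 + lambda)]. *)
Lemma param_iff n lam s :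
  s <> 1 -> lam * (s * geom n s) = 1 <-> 1 + s ^ S n * lam = s * (1 + lam).
Proof.
  intros Hs. pose proof (geom_closed n s) as Hg. simpl pow. split; intros H.
  - apply (Rmult_eq_reg_l (1 - s)); [|lra].
    replace (s * s ^ n) with (s - s * ((1 - s) * geom n s)) by (rewrite Hg; ring). nra.
  - apply (Rmult_eq_reg_l (1 - s)); [|lra].
    replace ((1 - s) * (lam * (s * geom n s))) with (lam * s * ((1 - s) * geom n s)) by ring.
    rewrite Hg. nra.
Qed.

Lemma f_neq_below n a b : (1 <= n)%nat -> 0 < a < b -> b <= / INR n -> Defs.f n a <> Defs.f n b.
Proof.
  intros Hn Hab Hb Hf. unfold Defs.f in Hf. rewrite Nat.add_1_r in Hf.
  assert (Hn' : 1 <= INR n) by (apply (le_INR 1); exact Hn).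
  set (s := (1 + a) / (1 + b)).
  assert (Hsb : s * (1 + b) = 1 + a) by (unfold s; field; lra).
  assert (Hs : 0 < s < 1).
  { split; [unfold s; apply Rdiv_lt_0_compat; lra|]. apply Rmult_lt_reg_r with (1 + b); lra. }
  assert (Ha : a = s ^ S n * b).
  { assert (Hcross : (1 + a) ^ S n * b = (1 + b) ^ S n * a).
    { apply (Rmult_eq_reg_r (/ a * / b)); [|apply Rmult_integral_contrapositive; split;
        apply Rinv_neq_0_compat; lra].
      replace ((1 + a) ^ S n * b * (/ a * / b)) with ((1 + a) ^ S n / a) by (field; lra).
      rewrite Hf. field. lra. }
    rewrite <- Hsb, Rpow_mult_distr in Hcross. pose proof (pow_lt (1 + b) (S n) ltac:(lra)).
    apply (Rmult_eq_reg_l ((1 + b) ^ S n)); lra. }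
  assert (Hparam : b * (s * geom n s) = 1) by (apply param_iff; lra).
  pose proof (mul_geom_lt_INR n s Hn ltac:(lra)).
  assert (b * INR n <= 1) by (apply (Rmult_le_reg_r (/ INR n)); [apply Rinv_0_lt_compat|
    rewrite Rmult_assoc, Rinv_r, Rmult_1_r, Rmult_1_l]; lra).
  nra.
Qed.

Lemma mu_of_eq n lam m :
  (1 <= n)%nat -> 0 < m <= / INR n -> Defs.f n m = Defs.f n lam -> mu_of n lam = m.
Proof.
  intros Hn Hm Hf. unfold mu_of.
  destruct (epsilon_spec (inhabits 0) (fun m => 0 < m <= / INR n /\ Defs.f n m = Defs.f n lam)
    (ex_intro _ m (conj Hm Hf))) as [Hm' Hf'].
  set (m' := epsilon _ _) in *.
  destruct (Rtotal_order m' m) as [Hlt|[Heq|Hgt]]; [|exact Heq|];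
    exfalso; [apply (f_neq_below n m' m) | apply (f_neq_below n m m')]; auto; lra.
Qed.

Lemma mu_of_param n lam s :
  (1 <= n)%nat -> 0 < s < 1 -> lam * (s * geom n s) = 1 -> mu_of n lam = s ^ S n * lam.
Proof.
  intros Hn Hs Hparam. assert (Hn' : 1 <= INR n) by (apply (le_INR 1); exact Hn).
  pose proof (geom_ge1 n s Hn ltac:(lra)). pose proof (pow_lt s (S n) ltac:(lra)).
  pose proof (param_pos n lam s Hn ltac:(lra) Hparam) as Hlam.
  apply mu_of_eq; [exact Hn| split |].
  - apply Rmult_lt_0_compat; assumption.
  - pose proof (pow_mul_le_geom n s ltac:(lra)).
    apply (Rmult_le_reg_r (INR n)); [lra|]. rewrite Rinv_l by lra. simpl pow. nra.
  - apply param_iff in Hparam; [|lra]. unfold Defs.f. rewrite Nat.add_1_r, Hparam, Rpow_mult_distr.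
    field. split; lra.
Qed.

Lemma lambda_nj_param n k lam s :
  (1 <= n)%nat -> 0 < s < 1 -> lam * (s * geom n s) = 1 ->
  lambda_nj n (S (S k)) (Fin lam) = Fin (s ^ k / geom n s).
Proof.
  intros Hn Hs Hparam. pose proof (geom_ge1 n s Hn ltac:(lra)).
  pose proof (param_pos n lam s Hn ltac:(lra) Hparam) as Hlam.
  unfold lambda_nj. rewrite (mu_of_param n lam s Hn Hs Hparam). f_equal.
  set (e := (INR (S (S k)) - 1) / (INR n + 1)).
  rewrite <- Rpower_mult_distr, Rmult_comm, Rmult_assoc, <- Rpower_plus by (try apply pow_lt; lra).
  replace (e + (1 - e)) with 1 by ring. rewrite Rpower_1 by lra.
  rewrite <- (Rpower_pow (S n) s), Rpower_mult by lra.
  replace (INR (S n) * e) with (INR (S k)) by (unfold e; rewrite !S_INR; field; pose proof (pos_INR n); lra).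
  rewrite Rpower_pow by lra.
  apply (Rmult_eq_reg_r (geom n s)); [|lra].
  replace (s ^ S k * lam * geom n s) with (s ^ k * (lam * (s * geom n s))) by (simpl; ring).
  rewrite Hparam. field. lra.
Qed.

Lemma lambda_nj_inv n j : (1 <= n)%nat -> lambda_nj n j (Fin (/ INR n)) = Fin (/ INR n).
Proof.
  intros Hn. assert (Hn' : 1 <= INR n) by (apply (le_INR 1); exact Hn).
  assert (0 < / INR n) by (apply Rinv_0_lt_compat; lra).
  unfold lambda_nj. rewrite (mu_of_eq n (/ INR n) (/ INR n) Hn ltac:(lra) eq_refl).
  rewrite <- Rpower_plus. replace (_ + _) with 1 by ring. now rewrite Rpower_1.
Qed.

Lemma param_exists n lam :
  (1 <= n)%nat -> / INR n < lam -> exists s, 0 < s < 1 /\ lam * (s * geom n s) = 1.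
Proof.
  intros Hn Hlam. assert (Hn' : 1 <= INR n) by (apply (le_INR 1); exact Hn).
  assert (0 < / INR n) by (apply Rinv_0_lt_compat; lra).
  assert (Hlam' : / lam < INR n).
  { rewrite <- (Rinv_inv (INR n)). apply Rinv_lt_contravar; [nra | exact Hlam]. }
  assert (0 < / lam) by (apply Rinv_0_lt_compat; lra).
  assert (Hc : continuity (fun s => s * geom n s - / lam)).
  { intros x. apply continuity_pt_minus; [|apply continuity_pt_const; intros ? ?; reflexivity].
    apply continuity_pt_mult; [apply derivable_continuous_pt, derivable_pt_id | apply geom_continuous]. }
  destruct (IVT _ 0 1 Hc ltac:(lra)) as [s [Hs Hs0]]; [simpl; lra | rewrite geom_one; lra |].
  exists s. assert (HT : s * geom n s = / lam) by lra. split.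
  - destruct (Req_dec s 0) as [->|]; [simpl in *; lra|].
    destruct (Req_dec s 1) as [->|]; [rewrite geom_one in *; lra | lra].
  - rewrite HT. field. lra.
Qed.

Lemma param_order n lam1 lam2 s1 s2 :
  (1 <= n)%nat -> 0 <= s1 -> 0 <= s2 -> 0 < lam1 < lam2 ->
  lam1 * (s1 * geom n s1) = 1 -> lam2 * (s2 * geom n s2) = 1 -> s2 < s1.
Proof.
  intros Hn Hs1 Hs2 Hlam H1 H2. destruct (Rlt_or_le s2 s1) as [|Hle]; [assumption|exfalso].
  destruct (Rle_lt_or_eq_dec s1 s2 Hle) as [Hlt| ->].
  - pose proof (mul_geom_lt n s1 s2 Hn ltac:(lra)).
    assert (0 <= s1 * geom n s1) by (pose proof (geom_ge0 n s1 Hs1); nra). nra.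
  - assert ((lam2 - lam1) * (s2 * geom n s2) = 0) by lra.
    destruct (Rmult_integral _ _ H) as [|HT]; [lra | rewrite HT in H1; lra].
Qed.

Section RegularGraph.

Variables n k : nat.
Hypothesis Hn : (1 <= n)%nat.
Hypothesis Hk : (1 <= k)%nat.

Let HINR : 1 <= INR n.
Proof. apply (le_INR 1); exact Hn. Qed.

Lemma param_gap s :
  0 < s < 1 -> exists c, 0 < c /\ s ^ k / geom n s = / INR n - c * slope_sum n k s.
Proof.
  intros Hs. pose proof (geom_ge1 n s Hn ltac:(lra)). pose proof (pow_lt s k ltac:(lra)).
  exists (s ^ k * (1 - s) / (INR n * geom n s)). split.
  - apply Rdiv_lt_0_compat; nra.
  - apply (Rmult_eq_reg_r (INR n * geom n s)); [|nra].
    replace ((/ INR n - s ^ k * (1 - s) / (INR n * geom n s) * slope_sum n k s) * (INR n * geom n s))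
      with (geom n s - s ^ k * (1 - s) * slope_sum n k s) by (field; lra).
    rewrite slope_sum_spec by lra. field. lra.
Qed.

Lemma lambda_nj_lt_inv lam s :
  0 < s < 1 -> lam * (s * geom n s) = 1 -> 0 < slope_sum n k s ->
  Rbar_lt (lambda_nj n (S (S k)) (Fin lam)) (Fin (/ INR n)).
Proof.
  intros Hs Hparam HL. rewrite (lambda_nj_param n k lam s Hn Hs Hparam). simpl.
  destruct (param_gap s Hs) as [c [Hc ->]]. nra.
Qed.

Lemma lambda_nj_gt_inv lam s :
  0 < s < 1 -> lam * (s * geom n s) = 1 -> slope_sum n k s < 0 ->
  Rbar_lt (Fin (/ INR n)) (lambda_nj n (S (S k)) (Fin lam)).
Proof.
  intros Hs Hparam HL. rewrite (lambda_nj_param n k lam s Hn Hs Hparam). simpl.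
  destruct (param_gap s Hs) as [c [Hc ->]]. nra.
Qed.

Lemma lambda_nj_PInf_lt_inv : Rbar_lt (lambda_nj n (S (S k)) PInf) (Fin (/ INR n)).
Proof.
  destruct k as [|k']; [lia|]. simpl. apply Rinv_0_lt_compat. lra.
Qed.

Lemma regular_graph_small :
  (n <= 2 * k + 1)%nat ->
  forall x, Rbar_lt (Fin (/ INR n)) x -> Rbar_lt (lambda_nj n (S (S k)) x) (Fin (/ INR n)).
Proof.
  intros Hsmall [lam|] Hx; [|exact lambda_nj_PInf_lt_inv].
  destruct (param_exists n lam Hn Hx) as [s [Hs Hparam]].
  apply (lambda_nj_lt_inv lam s Hs Hparam).
  assert (0 <= slope_sum n k 1).
  { rewrite slope_sum_one. apply (le_INR _ _) in Hsmall. rewrite plus_INR, mult_INR in Hsmall.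
    simpl in Hsmall. pose proof (pos_INR n). nra. }
  pose proof (slope_sum_decreasing n k s 1 Hn Hk ltac:(lra)). lra.
Qed.

Lemma slope_sum_inv_pos : (2 <= n)%nat -> 0 < slope_sum n k (/ INR n).
Proof.
  intros Hn2. set (a := / INR n).
  assert (Ha : 0 < a < 1).
  { split; [apply Rinv_0_lt_compat | rewrite <- Rinv_1; apply Rinv_lt_contravar];
      try apply (le_INR 2) in Hn2; simpl in *; lra. }
  assert (Hna : INR n * a ^ k <= 1).
  { replace 1 with (INR n * a) by (unfold a; field; lra).
    apply Rmult_le_compat_l; [lra | now apply pow_le_base; [lra |]]. }
  pose proof (geom_ge_1_plus n a Hn2 ltac:(lra)).
  pose proof (slope_sum_spec n k a ltac:(lra)). pose proof (pow_lt a k ltac:(lra)).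
  assert (0 < a ^ k * (1 - a)) by nra.
  destruct (Rlt_or_le 0 (slope_sum n k a)) as [|HL]; [assumption | exfalso]. nra.
Qed.

Lemma slope_sum_root :
  (2 * k + 2 <= n)%nat -> exists z, / INR n < z < 1 /\ slope_sum n k z = 0.
Proof.
  intros Hlarge. pose proof (slope_sum_inv_pos ltac:(lia)) as Hstart.
  apply le_INR in Hlarge. rewrite plus_INR, mult_INR in Hlarge. simpl in Hlarge.
  assert (Hk' : 1 <= INR k) by (apply (le_INR 1); exact Hk).
  assert (Hend : slope_sum n k 1 < 0) by (rewrite slope_sum_one; nra).
  assert (Ha : / INR n < 1) by (rewrite <- Rinv_1; apply Rinv_lt_contravar; lra).
  assert (0 < / INR n) by (apply Rinv_0_lt_compat; lra).
  destruct (IVT_interv (fun s => - slope_sum n k s) (/ INR n) 1) as [z [Hz Hz0]]; try lra.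
  - intros x Hx. apply continuity_pt_opp, slope_sum_continuous. lra.
  - exists z. assert (HL : slope_sum n k z = 0) by lra. rewrite HL in *.
    assert (z <> / INR n) by (intros ->; lra). assert (z <> 1) by (intros ->; lra).
    repeat split; try lra.
Qed.

Lemma regular_graph_large :
  (2 * k + 2 <= n)%nat ->
  exists lt : R,
    / INR n < lt < INR n /\
    (forall l, / INR n < l < lt -> Rbar_lt (Fin (/ INR n)) (lambda_nj n (S (S k)) (Fin l))) /\
    lambda_nj n (S (S k)) (Fin (/ INR n)) = Fin (/ INR n) /\
    lambda_nj n (S (S k)) (Fin lt) = Fin (/ INR n) /\
    (forall x, Rbar_lt (Fin lt) x -> Rbar_lt (lambda_nj n (S (S k)) x) (Fin (/ INR n))).
Proof.
  intros Hlarge. destruct (slope_sum_root Hlarge) as [z [Hz Hz0]].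
  assert (Hinv : 0 < / INR n) by (apply Rinv_0_lt_compat; lra).
  pose proof (geom_ge1 n z Hn ltac:(lra)) as HG.
  assert (HT : / INR n < z * geom n z < INR n).
  { split; [nra | apply mul_geom_lt_INR; [exact Hn | lra]]. }
  set (lt := / (z * geom n z)).
  assert (Hparam : lt * (z * geom n z) = 1) by (unfold lt; field; lra).
  assert (Hlt : / INR n < lt < INR n).
  { unfold lt. split; [apply Rinv_lt_contravar; nra |].
    rewrite <- (Rinv_inv (INR n)). apply Rinv_lt_contravar; nra. }
  exists lt. split; [exact Hlt | split; [| split; [| split]]].
  - intros l Hl. destruct (param_exists n l Hn ltac:(lra)) as [s [Hs Hsparam]].
    apply (lambda_nj_gt_inv l s Hs Hsparam).
    pose proof (param_order n l lt s z Hn ltac:(lra) ltac:(lra) ltac:(lra) Hsparam Hparam).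
    pose proof (slope_sum_decreasing n k z s Hn Hk ltac:(lra)). lra.
  - exact (lambda_nj_inv n _ Hn).
  - rewrite (lambda_nj_param n k lt z Hn ltac:(lra) Hparam). f_equal.
    pose proof (slope_sum_spec n k z ltac:(lra)) as Hspec. rewrite Hz0 in Hspec.
    pose proof (pow_lt z k ltac:(lra)). field_simplify_eq; nra.
  - intros [l|] Hl; [simpl in Hl | exact lambda_nj_PInf_lt_inv].
    destruct (param_exists n l Hn ltac:(lra)) as [s [Hs Hsparam]].
    apply (lambda_nj_lt_inv l s Hs Hsparam).
    pose proof (param_order n lt l z s Hn ltac:(lra) ltac:(lra) ltac:(lra) Hparam Hsparam).
    pose proof (slope_sum_decreasing n k s z Hn Hk ltac:(lra)). lra.
Qed.

End RegularGraph.

Theorem theorem2p5 (n j : nat) (hj : (3 <= j)%nat) (hn : (j - 2 <= n)%nat) :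
  ((2 * j - 2 <= n)%nat ->
     exists lt : R,
       / INR n < lt < INR n /\
       (forall l : R, / INR n < l < lt ->
          Rbar_lt (Fin (/ INR n)) (lambda_nj n j (Fin l))) /\
       lambda_nj n j (Fin (/ INR n)) = Fin (/ INR n) /\
       lambda_nj n j (Fin lt) = Fin (/ INR n) /\
       (forall x : Rbar, Rbar_lt (Fin lt) x ->
          Rbar_lt (lambda_nj n j x) (Fin (/ INR n)))) /\
  ((n <= 2 * j - 3)%nat ->
     forall x : Rbar, Rbar_lt (Fin (/ INR n)) x ->
       Rbar_lt (lambda_nj n j x) (Fin (/ INR n))).
Proof.
  destruct j as [|[|k]]; [lia | lia |].
  assert (Hk : (1 <= k)%nat) by lia.
  assert (Hn : (1 <= n)%nat) by lia.
  split; intros Hbound.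
  - exact (regular_graph_large n k Hn Hk ltac:(lia)).
  - exact (regular_graph_small n k Hn Hk ltac:(lia)).
Qed.
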